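(* Consider a congestion game with $m\ge1$ players and $F\ge1$ facilities in which every player has the full action space $\mathcal A_i=2^{\mathcal F}$, and let $\bm a^*$ be a pure Nash equilibrium with counts $n^*_f=n^f(\bm a^* )$. Let $S$ be a set of joint actions consisting of $\bm a^*$ together with, for each facility $f$, fixed joint actions $\bm z_f^{0}$, $\bm z_f^{-}$ (only if $n^*_f\ge1$) and $\bm z_f^{+}$ (only if $n^*_f\le m-1$) whose count vectors $(n^g(\cdot))_{g\in\mathcal F}$ agree with $(n^*_g)_{g}$ on every facility $g\ne f$ and have count on $f$ equal to $0$, $n^*_f-1$ and $n^*_f+1$ respectively (so $|S|\le 3F+1$). Let $\rho$ be uniform on $S$ and let $\bm a^1,\dots,\bm a^n$ be i.i.d. from $\rho$. Let $\delta\in(0,1)$. If $n\ge 8(3F+1)\log((3F+1)/\delta)$, then with probability at least $1-\delta$, for every $i\in[m]$ and every $\pi_i\in\Delta(\mathcal A_i)$, $$V\succeq I+\frac{n}{24F^3}\,\mathbb E_{\bm a\sim(\pi_i,\bm a^*_{-i})}\big[A_i(\bm a)A_i(\bm a)^\top\big],$$ where $(\pi_i,\bm a^*_{-i})$ denotes player $i$ playing $\pi_i$ and every other player $j$ playing $a^*_j$. That is, Assumption (Strong Covariance Domination) holds with $C_{\mathrm{game}}=\frac{1}{24F^3}$ and $\pi^*=\bm a^*$.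
   Context: Congestion game: $m$ players, finite facility set $\mathcal F$ with $F=|\mathcal F|$, action sets $\mathcal A_i\subseteq 2^{\mathcal F}$, $\mathcal A=\prod_i\mathcal A_i$, $n^f(\bm a)=|\{i: f\in a_i\}|$; facility $f$ with $\ell\ge1$ users has mean reward $r^f(\ell)$ and player $i$'s mean reward is $r_i(\bm a)=\sum_{f\in a_i}r^f(n^f(\bm a))$. A pure Nash equilibrium is a joint action $\bm a^*$ such that no player can increase $r_i$ by changing only its own action. Feature maps: let $d=mF$ and index coordinates of $\mathbb R^d$ by pairs $(f,\ell)$, $f\in\mathcal F$, $\ell\in\{1,\dots,m\}$, with standard basis vectors $e_{(f,\ell)}$. For $i\in[m]$, $A_i(\bm a)=\sum_{f\in a_i}e_{(f,n^f(\bm a))}$, and the game-level feature is $A(\bm a)=\sum_{i=1}^m A_i(\bm a)=\sum_{f:\,n^f(\bm a)\ge1}n^f(\bm a)\,e_{(f,n^f(\bm a))}$, so that the total reward has mean $\langle A(\bm a),\theta\rangle$ with $\theta_{(f,\ell)}=r^f(\ell)$. Game-level covariance matrix: $V=I+\sum_{k=1}^n A(\bm a^k)A(\bm a^k)^\top$, where $\bm a^1,\dots,\bm a^n$ are the joint actions in the dataset. $\succeq$ is the positive semidefinite (Loewner) order. *)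

From HB Require Import structures.
From mathcomp Require Import all_boot all_order all_algebra.
From mathcomp Require Import boolp reals exp.
Set Implicit Arguments. Unset Strict Implicit. Unset Printing Implicit Defensive.
Import Order.TTheory GRing.Theory Num.Theory.
Local Open Scope ring_scope.

Definition jact (m F : nat) := {ffun 'I_m -> {set 'I_F}}.

Definition cnt (m F : nat) (a : jact m F) (f : 'I_F) : nat := #|[set i | f \in a i]|.

Definition reward (R : numDomainType) (m F : nat) (r : 'I_F -> nat -> R)
  (a : jact m F) (i : 'I_m) : R := \sum_(f in a i) r f (cnt a f).

Definition deviate (m F : nat) (a : jact m F) (i : 'I_m) (b : {set 'I_F}) : jact m F :=
  [ffun j => if j == i then b else a j].

Definition is_PNE (R : numDomainType) (m F : nat) (r : 'I_F -> nat -> R) (a : jact m F) :=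
  forall (i : 'I_m) (b : {set 'I_F}), reward r (deviate a i b) i <= reward r a i.

(* standard basis vector e_{(f,l)} of R^{F*m}, l in {1..m}; coordinate (f,l)
   is mxvec_index f (l-1) *)
Definition basis_e (R : numDomainType) (m F : nat) (f : 'I_F) (l : nat) : 'cV[R]_(F * m) :=
  \col_k ([exists j : 'I_m, (val j == l.-1) && (k == mxvec_index f j)])%:R.

Definition feat_i (R : numDomainType) (m F : nat) (a : jact m F) (i : 'I_m) : 'cV[R]_(F * m) :=
  \sum_(f in a i) basis_e R m f (cnt a f).

Definition feat (R : numDomainType) (m F : nat) (a : jact m F) : 'cV[R]_(F * m) :=
  \sum_(i < m) feat_i R a i.

Definition covV (R : numDomainType) (m F n : nat) (w : {ffun 'I_n -> jact m F}) : 'M[R]_(F * m) :=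
  1%:M + \sum_(k < n) (feat R (w k) *m (feat R (w k))^T).

Definition psd_ge (R : numDomainType) (d : nat) (M N : 'M[R]_d) : Prop :=
  forall x : 'cV[R]_d, 0 <= (x^T *m (M - N) *m x) 0 0.

Definition is_dist (R : numDomainType) (F : nat) (pi : {ffun {set 'I_F} -> R}) : Prop :=
  (forall b, 0 <= pi b) /\ \sum_b pi b = 1.

Definition exp_outer (R : numDomainType) (m F : nat) (a : jact m F) (i : 'I_m)
  (pi : {ffun {set 'I_F} -> R}) : 'M[R]_(F * m) :=
  \sum_b pi b *: (feat_i R (deviate a i b) i *m (feat_i R (deviate a i b) i)^T).

Definition prob_iid (R : numFieldType) (m F n : nat) (S : {set jact m F})
  (E : {ffun 'I_n -> jact m F} -> Prop) : R :=
  (#|[set w : {ffun 'I_n -> jact m F} | [forall k, w k \in S] && `[< E w >]]|%:R)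
  / ((#|S| ^ n)%:R).

From HB Require Import structures.
From mathcomp Require Import all_boot all_order all_algebra.
From mathcomp Require Import boolp reals sequences exp.
From mathcomp Require Import ring lra zify.
Import Order.TTheory GRing.Theory Num.Theory.
Set Implicit Arguments. Unset Strict Implicit. Unset Printing Implicit Defensive.
Local Open Scope ring_scope.

(* For a sample w the quadratic form of V - I at x is sum_(s in S) N_s <A(s), x>^2,
   where N_s counts the occurrences of s in w.  The feature A_i(b, astar_-i) is a sum of
   at most F basis vectors e_(f,l) with l = n*_f or l = n*_f + 1, and each of them is
   a positive multiple of A(astar) - A(z_f^0) or of A(z_f^+) - A(z_f^0); by Cauchy-Schwarz
   <A_i, x>^2 <= 2 F^2 sum_(s in S) <A(s), x>^2.  Hence V dominates
   I + n/(24 F^3) E[A_i A_i^T] as soon as every s in S occurs at least n/(2|S|) times,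
   because 2|S| <= 12 F.  A Chernoff bound with the generating function
   sum_w (1/2)^(N_s(w)) = (|S| - 1/2)^n shows that a fixed s is rarer than that with
   probability at most exp(-n/(8|S|)), and a union bound over S concludes. *)


Section QuadraticForm.
Variables (R : comPzRingType) (d : nat).
Implicit Types (u v x : 'cV[R]_d) (M N : 'M[R]_d).

Definition dot u x : R := \sum_k u k 0 * x k 0.

Definition qform M x : R := (x^T *m M *m x) 0 0.

Lemma dotB u v x : dot (u - v) x = dot u x - dot v x.
Proof. by rewrite /dot -sumrB; apply: eq_bigr => k _; rewrite !mxE mulrBl. Qed.

Lemma dotMn u x c : dot (u *+ c) x = dot u x *+ c.
Proof. by rewrite /dot -sumrMnl; apply: eq_bigr => k _; rewrite mulmxnE mulrnAl. Qed.

Lemma dot_sum (I : finType) (P : pred I) (U : I -> 'cV[R]_d) x :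
  dot (\sum_(i | P i) U i) x = \sum_(i | P i) dot (U i) x.
Proof.
rewrite /dot; under eq_bigr do rewrite summxE mulr_suml.
by rewrite exchange_big.
Qed.

Lemma qformB M N x : qform (M - N) x = qform M x - qform N x.
Proof. by rewrite /qform mulmxBr mulmxBl !mxE. Qed.

Lemma qform_sum (I : finType) (P : pred I) (U : I -> 'M[R]_d) x :
  qform (\sum_(i | P i) U i) x = \sum_(i | P i) qform (U i) x.
Proof. by rewrite /qform mulmx_sumr mulmx_suml summxE. Qed.

Lemma qformZ a M x : qform (a *: M) x = a * qform M x.
Proof. by rewrite /qform -scalemxAr -scalemxAl mxE. Qed.

Lemma qform_outer u x : qform (u *m u^T) x = dot u x ^+ 2.
Proof.
rewrite /qform !mulmxA -mulmxA mxE big_ord1 expr2.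
by congr (_ * _); rewrite mxE; apply: eq_bigr => k _; rewrite mxE // mulrC.
Qed.

End QuadraticForm.

Section Counts.
Variables (m F : nat).
Implicit Types (a : jact m F) (i : 'I_m) (f : 'I_F) (b : {set 'I_F}).

Lemma cnt_deviate a i b f : f \in b ->
  cnt (deviate a i b) f = if f \in a i then cnt a f else (cnt a f).+1.
Proof.
move=> fb; rewrite /cnt (cardsD1 i [set j | f \in deviate a i b j])
  (cardsD1 i [set j | f \in a j]) !inE /deviate ffunE eqxx fb.
have -> : [set j | f \in [ffun j => if j == i then b else a j] j] :\ i =
          [set j | f \in a j] :\ i.
  by apply/setP => j; rewrite !inE ffunE; case: eqP.
by case: (f \in a i).
Qed.

Lemma cnt_gt0 a i f : f \in a i -> (0 < cnt a f)%N.
Proof. by move=> fa; rewrite /cnt card_gt0; apply/set0Pn; exists i; rewrite inE. Qed.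

Lemma cnt_le_pred a i f : f \notin a i -> (cnt a f <= m.-1)%N.
Proof.
move=> fa; rewrite /cnt -[m in m.-1]card_ord -(cardsC1 i); apply: subset_leq_card.
by apply/subsetP => j; rewrite !inE; apply: contraTneq => ->.
Qed.

End Counts.

Section Features.
Variables (R : numDomainType) (m F : nat).
Implicit Types (a : jact m F) (f : 'I_F).

Lemma featE a : feat R a = \sum_f basis_e R m f (cnt a f) *+ cnt a f.
Proof.
rewrite /feat /feat_i; under eq_bigr do rewrite big_mkcond.
rewrite exchange_big; apply: eq_bigr => f _.
rewrite -big_mkcond /= /cnt -sumr_const.
by apply: eq_bigl => i; rewrite inE.
Qed.

Lemma featB_cnt0 (z z' : jact m F) f :
  cnt z' f = 0%N -> (forall g, g != f -> cnt z g = cnt z' g) ->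
  feat R z - feat R z' = basis_e R m f (cnt z f) *+ cnt z f.
Proof.
move=> z'f0 eq_cnt; rewrite !featE (bigD1 f) //= [X in _ - X](bigD1 f) //= z'f0.
rewrite mulr0n add0r (eq_bigr (fun g => basis_e R m g (cnt z' g) *+ cnt z' g)) ?addrK //.
by move=> g /eq_cnt ->.
Qed.

End Features.

Section Inequalities.
Variable R : realDomainType.

Lemma sqr_sum_le (I : finType) (A : {pred I}) (y : I -> R) (c : R) :
  (forall i, i \in A -> y i ^+ 2 <= c) ->
  (\sum_(i in A) y i) ^+ 2 <= c * (#|A| ^ 2)%:R.
Proof.
move=> yc; rewrite expr2 mulr_suml.
have -> : c * (#|A| ^ 2)%:R = \sum_(i in A) \sum_(j in A) c.
  by rewrite !sumr_const -mulrnA mulr_natr expnS expn1.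
apply: ler_sum => i Ai; rewrite mulr_sumr; apply: ler_sum => j Aj.
have := yc i Ai; have := yc j Aj; have := sqr_ge0 (y i - y j); rewrite !expr2; nra.
Qed.

Lemma sqr_subr_le_sum (T : finType) (S : {set T}) (h : T -> R) s1 s2 :
  s1 \in S -> s2 \in S -> (h s1 - h s2) ^+ 2 <= 2 * \sum_(s in S) h s ^+ 2.
Proof.
move=> s1S s2S; have [->|s12] := eqVneq s1 s2.
  by rewrite subrr expr0n mulr_ge0 // sumr_ge0 // => s _; rewrite sqr_ge0.
rewrite (bigD1 s1) //= (bigD1 s2) /=; last by rewrite s2S eq_sym.
set rest := \sum_(i | _) _.
have : 0 <= rest by rewrite sumr_ge0 // => s _; rewrite sqr_ge0.
have := sqr_ge0 (h s1 + h s2); rewrite !expr2; lra.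
Qed.

Lemma dot_sqr_leMn d (u x : 'cV[R]_d) c :
  (0 < c)%N -> dot u x ^+ 2 <= dot (u *+ c) x ^+ 2.
Proof.
move=> c_gt0; rewrite dotMn -mulr_natr exprMn.
by apply: ler_peMr; [rewrite sqr_ge0 | apply: exprn_ege1; rewrite ler1n].
Qed.

End Inequalities.

Definition occurrences (T : finType) n (w : {ffun 'I_n -> T}) (s : T) : nat :=
  #|[set j | w j == s]|.

Lemma sum_occurrences (V : nmodType) (T : finType) n (w : {ffun 'I_n -> T})
    (S : {set T}) (h : T -> V) :
  (forall j, w j \in S) -> \sum_j h (w j) = \sum_(s in S) h s *+ occurrences w s.
Proof.
move=> wS; rewrite (partition_big w (mem S)) /=; last by move=> j _; exact: wS.
apply: eq_bigr => s _; rewrite (eq_bigr (fun _ => h s)); last by move=> j /eqP ->.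
by rewrite /occurrences -sumr_const; apply: eq_bigl => j; rewrite inE.
Qed.

Section Design.
Variables (R : realFieldType) (m F : nat) (astar : jact m F).
Variables (z0 zp : 'I_F -> jact m F) (S : {set jact m F}).
Hypotheses (astarS : astar \in S) (z0S : forall f, z0 f \in S).
Hypothesis zpS : forall f, (cnt astar f <= m.-1)%N -> zp f \in S.
Hypothesis z0_cnt : forall f : 'I_F, cnt (z0 f) f = 0%N /\
  forall g : 'I_F, g != f -> cnt (z0 f) g = cnt astar g.
Hypothesis zp_cnt : forall f : 'I_F, (cnt astar f <= m.-1)%N ->
  cnt (zp f) f = (cnt astar f).+1 /\
  forall g : 'I_F, g != f -> cnt (zp f) g = cnt astar g.

Implicit Types (i : 'I_m) (b : {set 'I_F}) (f : 'I_F) (x : 'cV[R]_(F * m)).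

Let energy x := \sum_(s in S) dot (feat R s) x ^+ 2.

Lemma energy_ge0 x : 0 <= energy x.
Proof. by apply: sumr_ge0 => s _; apply: sqr_ge0. Qed.

(* The basis direction e_(f, l) is a multiple of feat z - feat (z0 f) for
   z = astar when l = n*_f and for z = zp f when l = n*_f + 1. *)
Lemma dot_basis_deviate_le i b f x : f \in b ->
  dot (basis_e R m f (cnt (deviate astar i b) f)) x ^+ 2 <= 2 * energy x.
Proof.
move=> fb; have [z [zS zf_gt0 z_eq ->]] : exists z, [/\ z \in S, (0 < cnt z f)%N,
    forall g, g != f -> cnt z g = cnt astar g &
    cnt (deviate astar i b) f = cnt z f].
  rewrite cnt_deviate //; case: ifPn => [fa|fNa].
    by exists astar; split=> //; apply: cnt_gt0 fa.
  have fle := cnt_le_pred fNa; have [zpf zp_eq] := zp_cnt fle.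
  by exists (zp f); split; rewrite ?zpf //; apply: zpS.
apply: le_trans (dot_sqr_leMn _ _ zf_gt0) _.
rewrite -(featB_cnt0 _ (z0_cnt f).1); last by move=> g gf; rewrite z_eq // (z0_cnt f).2.
by rewrite dotB; apply: (sqr_subr_le_sum (fun s => dot (feat R s) x) zS (z0S f)).
Qed.

Lemma dot_feat_deviate_le i b x :
  dot (feat_i R (deviate astar i b) i) x ^+ 2 <= 2 * energy x * (F ^ 2)%:R.
Proof.
rewrite /feat_i ffunE eqxx dot_sum.
apply: le_trans (sqr_sum_le (fun f => @dot_basis_deviate_le i b f x)) _.
apply: ler_wpM2l; first by rewrite mulr_ge0 ?energy_ge0.
by rewrite ler_nat leq_exp2r // -[X in (_ <= X)%N]card_ord max_card.
Qed.

Lemma covV_dominates n (w : {ffun 'I_n -> jact m F}) i pi :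
  (0 < F)%N -> (#|S| <= 3 * F + 1)%N -> (forall j, w j \in S) ->
  (forall s, s \in S -> (n <= 2 * #|S| * occurrences w s)%N) -> is_dist pi ->
  psd_ge (covV R w) (1%:M + (n%:R / (24 * F%:R ^+ 3)) *: exp_outer astar i pi).
Proof.
move=> F_gt0 S_le wS w_freq [pi_ge0 pi_sum1] x.
rewrite -/(qform _ x) /covV opprD addrACA subrr add0r qformB qformZ !qform_sum.
under eq_bigr do rewrite qform_outer.
under [X in _ - _ * X]eq_bigr do rewrite qformZ qform_outer.
rewrite (sum_occurrences (fun s => dot (feat R s) x ^+ 2) wS) subr_ge0.
set k := #|S| in S_le w_freq *.
have k_gt0 : (0 < k)%N by apply/card_gt0P; exists astar.
have sample_ge : n%:R / (2 * k%:R) * energy x <=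
    \sum_(s in S) dot (feat R s) x ^+ 2 *+ occurrences w s.
  rewrite /energy mulr_sumr; apply: ler_sum => s sS.
  rewrite mulrC -[X in _ <= X]mulr_natr; apply: ler_wpM2l; first exact: sqr_ge0.
  rewrite ler_pdivrMr ?mulr_gt0 ?ltr0n // -(natrM R 2 k) -natrM ler_nat mulnC.
  exact: w_freq.
have mean_le : \sum_b pi b * dot (feat_i R (deviate astar i b) i) x ^+ 2 <=
    2 * energy x * (F ^ 2)%:R.
  apply: le_trans (_ : \sum_b pi b * (2 * energy x * (F ^ 2)%:R) <= _).
    apply: ler_sum => b _.
    by apply: ler_wpM2l; [apply: pi_ge0 | apply: dot_feat_deviate_le].
  by rewrite -mulr_suml pi_sum1 mul1r.
set c := n%:R / _.
have c_ge0 : 0 <= c by rewrite divr_ge0 // mulr_ge0 // exprn_ge0.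
have F_neq0 : F%:R != 0 :> R by rewrite pnatr_eq0 -lt0n.
apply: le_trans sample_ge; apply: le_trans (ler_wpM2l c_ge0 mean_le) _.
have -> : c * (2 * energy x * (F ^ 2)%:R) = n%:R / (12 * F%:R) * energy x.
  by rewrite /c natrX; field.
apply: ler_wpM2r; first exact: energy_ge0.
rewrite ler_wpM2l // lef_pV2 ?posrE ?mulr_gt0 ?ltr0n //.
by rewrite -(natrM R 2 k) -(natrM R 12 F) ler_nat; lia.
Qed.

End Design.

Lemma ln2_le (R : realType) : ln (2 : R) <= 3 / 4.
Proof.
have two_le : (2 : R) <= expR (3 / 4).
  have -> : (3 / 4 : R) = 8%:R * (3 / 32) by rewrite -[8%:R]/(8 : R); field.
  rewrite expRM_natl; apply: (le_trans (_ : 2 <= (1 + 3 / 32) ^+ 8)).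
    by rewrite !exprS expr0; lra.
  apply: lerXn2r; rewrite ?nnegrE ?expR_ge1Dx //; [lra | exact: ltW (expR_gt0 _)].
by rewrite -ler_expR lnK // posrE; lra.
Qed.

Lemma subr_half_expn_le (R : realType) (k n : nat) : (0 < k)%N ->
  (k%:R - 1 / 2 : R) ^+ n <= (k ^ n)%:R * expR (- (n%:R / (2 * k%:R))).
Proof.
move=> k_gt0; have k_pos : (0 : R) < k%:R by rewrite ltr0n.
have -> : - (n%:R / (2 * k%:R)) = n%:R * (- (1 / (2 * k%:R))) :> R.
  by field; rewrite gt_eqF.
rewrite expRM_natl natrX -exprMn; apply: lerXn2r; rewrite ?nnegrE.
- by rewrite subr_ge0 (le_trans _ (_ : 1 <= k%:R)) ?ler1n //; lra.
- by rewrite mulr_ge0 ?ltW ?expR_gt0.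
have -> : (k%:R - 1 / 2 : R) = k%:R * (1 + - (1 / (2 * k%:R))).
  by field; rewrite gt_eqF.
by rewrite ler_pM2l // expR_ge1Dx.
Qed.

Lemma card_bigcup_le (I T : finType) (P : pred I) (B : I -> {set T}) :
  (#|\bigcup_(i | P i) B i| <= \sum_(i | P i) #|B i|)%N.
Proof.
elim/big_rec2: _ => [|i c U _ le_Uc]; first by rewrite cards0.
by rewrite (leq_trans (leq_card_setU _ _).1) ?leq_add2l.
Qed.

Section Sampling.
Variables (T : finType) (S : {set T}) (n : nat).

Definition rare s := [set w : {ffun 'I_n -> T} |
  (w \in ffun_on S) && (2 * #|S| * occurrences w s < n)%N].

Definition frequent := [set w : {ffun 'I_n -> T} |
  (w \in ffun_on S) && [forall s in S, n <= 2 * #|S| * occurrences w s]%N].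

Lemma sum_half_occurrences (R : realFieldType) s0 : s0 \in S ->
  \sum_(w : {ffun 'I_n -> T} | w \in ffun_on S) (1 / 2 : R) ^+ occurrences w s0 =
    (#|S|%:R - 1 / 2) ^+ n.
Proof.
move=> s0S; pose g s : R := if s == s0 then 1 / 2 else 1.
have sum_g : \sum_(s in S) g s = #|S|%:R - 1 / 2.
  rewrite (bigD1 s0) //= /g eqxx (eq_bigr (fun _ => 1)); last first.
    by move=> s /andP [_ /negPf ->].
  rewrite sumr_const (cardD1 s0 S) s0S /= natrD.
  have -> : #|[predD1 S & s0]| = #|[pred s in S | s != s0]|.
    by apply: eq_card => s; rewrite !inE andbC.
  lra.
rewrite -sum_g -[n in RHS]card_ord -prodr_const.
rewrite (bigA_distr_big (mem S) (fun _ s => g s)); apply: eq_bigr => w _.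
rewrite (bigID (fun j => w j == s0)) /= [X in _ = _ * X]big1; last first.
  by move=> j /negPf wj; rewrite /g wj.
rewrite mulr1 (eq_bigr (fun _ => 1 / 2)); last by move=> j wj; rewrite /g wj.
by rewrite /occurrences -prodr_const; apply: eq_bigl => j; rewrite inE.
Qed.

Lemma card_rare_le (R : realType) s0 : s0 \in S ->
  (#|rare s0|%:R : R) <= (#|S| ^ n)%:R * expR (- (n%:R / (8 * #|S|%:R))).
Proof.
move=> s0S; have k_gt0 : (0 < #|S|)%N by apply/card_gt0P; exists s0.
set k := #|S| in k_gt0 *; have k_pos : (0 : R) < k%:R by rewrite ltr0n.
set a : R := n%:R / (2 * k%:R).
have a_ge0 : 0 <= a by rewrite divr_ge0 // mulr_ge0.
have weight_ge w : w \in rare s0 ->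
    expR (- (a * ln 2)) <= (1 / 2 : R) ^+ occurrences w s0.
  rewrite inE => /andP [_ w_rare].
  have -> : (1 / 2 : R) = expR (- ln 2) by rewrite expRN lnK ?div1r // posrE.
  rewrite -expRM_natl ler_expR mulrN lerN2 ler_wpM2r ?ln_ge0 //; first lra.
  rewrite /a ler_pdivlMr ?mulr_gt0 // -(natrM R 2 k) -natrM ler_nat mulnC.
  exact: ltnW.
have rare_le : #|rare s0|%:R * expR (- (a * ln 2)) <= (k ^ n)%:R * expR (- a).
  apply: le_trans (subr_half_expn_le R n k_gt0); rewrite -(sum_half_occurrences R s0S).
  rewrite (bigID (mem (rare s0))) /= -[X in X <= _]addr0; apply: lerD; last first.
    by apply: sumr_ge0 => w _; rewrite exprn_ge0 // divr_ge0.
  rewrite mulr_natl -sumr_const [in X in _ <= X](eq_bigl (mem (rare s0))); last first.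
    by move=> w; rewrite andb_idl // inE => /andP [].
  by apply: ler_sum => w; apply: weight_ge.
have expR_inv : expR (- (a * ln 2)) * expR (a * ln 2) = 1.
  by rewrite -expRD addNr expR0.
have := ler_wpM2r (ltW (expR_gt0 (a * ln 2))) rare_le.
rewrite -mulrA expR_inv mulr1 => /le_trans; apply.
rewrite -mulrA -expRD ler_wpM2l // ler_expR.
have -> : n%:R / (8 * k%:R) = a / 4 :> R by rewrite /a; field; rewrite gt_eqF.
by have := ler_wpM2l a_ge0 (ln2_le R); lra.
Qed.

Lemma card_frequent_ge (R : realType) : (0 < #|S|)%N ->
  (#|S| ^ n)%:R * (1 - #|S|%:R * expR (- (n%:R / (8 * #|S|%:R)))) <=
    (#|frequent|%:R : R).
Proof.
move=> S_gt0; set A := [set w : {ffun 'I_n -> T} in ffun_on S].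
have cardA : #|A| = (#|S| ^ n)%N by rewrite cardsE card_ffun_on card_ord.
have AIfrequent : A :&: frequent = frequent.
  by apply/setIidPr/subsetP => w; rewrite !inE => /andP [].
have ADfrequent : A :\: frequent \subset \bigcup_(s in S) rare s.
  apply/subsetP => w; rewrite in_setD !in_set => /andP [w_infreq wS].
  rewrite wS /= in w_infreq.
  have [s sS s_rare] : exists2 s, s \in S & (2 * #|S| * occurrences w s < n)%N.
    by have /forallPn [s] := w_infreq; rewrite negb_imply -ltnNge => /andP []; exists s.
  by apply/bigcupP; exists s; rewrite // in_set wS.
have card_le : (#|A| <= #|frequent| + \sum_(s in S) #|rare s|)%N.
  rewrite -(cardsID frequent A) AIfrequent leq_add2l.
  exact: leq_trans (subset_leq_card ADfrequent) (card_bigcup_le _ _).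
have rares_le : (\sum_(s in S) #|rare s|)%:R <=
    #|S|%:R * ((#|S| ^ n)%:R * expR (- (n%:R / (8 * #|S|%:R)))) :> R.
  rewrite natr_sum [X in _ <= X]mulr_natl -sumr_const.
  by apply: ler_sum => s; apply: card_rare_le.
move: card_le; rewrite -(ler_nat R) natrD cardA; lra.
Qed.

End Sampling.

Lemma expR_tail_le (R : realType) (k n : nat) (K delta : R) :
  (0 < k)%N -> k%:R <= K -> 0 < delta -> 8 * K * ln (K / delta) <= n%:R ->
  k%:R * expR (- (n%:R / (8 * k%:R))) <= delta.
Proof.
move=> k_gt0 k_le delta_gt0 n_ge; have k_pos : (0 : R) < k%:R by rewrite ltr0n.
have K_pos : 0 < K by apply: lt_le_trans k_le.
have Kd_pos : 0 < K / delta by rewrite divr_gt0.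
have tail_le : expR (- (n%:R / (8 * k%:R))) <= delta / K.
  rewrite -[delta / K]invf_div -[K / delta]lnK ?posrE // -expRN ler_expR lerN2.
  apply: le_trans (_ : n%:R / (8 * K) <= _).
    by rewrite ler_pdivlMr ?mulr_gt0 // mulrC.
  by rewrite ler_wpM2l // lef_pV2 ?posrE ?mulr_gt0 // ler_wpM2l.
apply: le_trans (ler_wpM2l (ltW k_pos) tail_le) _.
by rewrite mulrCA ger_pMr // ler_pdivrMr // mul1r.
Qed.

Lemma card_setU1_imsets_le (T : finType) (F : nat) (x : T) (g0 g1 g2 : 'I_F -> T)
    (P Q : {pred 'I_F}) :
  (#|x |: ([set g0 f | f : 'I_F] :|: [set g1 f | f in P] :|: [set g2 f | f in Q])|
    <= 3 * F + 1)%N.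
Proof.
have card_imset_le (g : 'I_F -> T) (A : {pred 'I_F}) : (#|g @: A| <= F)%N.
  by rewrite (leq_trans (leq_imset_card _ _)) // -[X in (_ <= X)%N]card_ord max_card.
rewrite cardsU1 addnC leq_add ?leq_b1 // -[(3 * F)%N]/(F + (F + (F + 0)))%N addn0 addnA.
rewrite (leq_trans (leq_card_setU _ _).1) // leq_add //.
by rewrite (leq_trans (leq_card_setU _ _).1) // leq_add.
Qed.

Unset Implicit Arguments. Set Strict Implicit. Set Printing Implicit Defensive.

Theorem mainTheorem9 (R : realType) (m F : nat) (r : 'I_F -> nat -> R)
  (astar : jact m F) (z0 zm zp : 'I_F -> jact m F) (delta : R) (n : nat) :
  (0 < m)%N -> (0 < F)%N ->
  is_PNE r astar ->
  (forall f : 'I_F, cnt (z0 f) f = 0%N /\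
     forall g : 'I_F, g != f -> cnt (z0 f) g = cnt astar g) ->
  (forall f : 'I_F, (1 <= cnt astar f)%N ->
     cnt (zm f) f = (cnt astar f).-1 /\
     forall g : 'I_F, g != f -> cnt (zm f) g = cnt astar g) ->
  (forall f : 'I_F, (cnt astar f <= m.-1)%N ->
     cnt (zp f) f = (cnt astar f).+1 /\
     forall g : 'I_F, g != f -> cnt (zp f) g = cnt astar g) ->
  0 < delta < 1 ->
  8 * (3 * F + 1)%:R * ln ((3 * F + 1)%:R / delta) <= n%:R ->
  let S : {set jact m F} :=
    astar |: ([set z0 f | f : 'I_F]
              :|: [set zm f | f in [set f : 'I_F | (1 <= cnt astar f)%N]]
              :|: [set zp f | f in [set f : 'I_F | (cnt astar f <= m.-1)%N]]) in
  1 - delta <=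
    @prob_iid R m F n S (fun w : {ffun 'I_n -> jact m F} =>
      forall (i : 'I_m) (pi : {ffun {set 'I_F} -> R}), is_dist pi ->
        psd_ge (covV R w)
          (1%:M + (n%:R / (24 * F%:R ^+ 3)) *: exp_outer astar i pi)).
Proof.
move=> _ F_gt0 _ z0_cnt _ zp_cnt /andP [delta_gt0 _] n_ge /=.
set S := (astar |: _).
have astarS : astar \in S by rewrite setU11.
have z0S f : z0 f \in S by rewrite !in_setU imset_f ?orbT.
have zpS f : (cnt astar f <= m.-1)%N -> zp f \in S.
  by move=> f_le; rewrite !in_setU imset_f ?orbT ?inE.
have S_le : (#|S| <= 3 * F + 1)%N by apply: card_setU1_imsets_le.
have S_gt0 : (0 < #|S|)%N by apply/card_gt0P; exists astar.
rewrite /prob_iid ler_pdivlMr ?ltr0n ?expn_gt0 ?S_gt0 //.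
apply: le_trans
  (_ : (#|S| ^ n)%:R * (1 - #|S|%:R * expR (- (n%:R / (8 * #|S|%:R)))) <= _).
  rewrite mulrC ler_wpM2l // lerD2l lerN2.
  by apply: expR_tail_le n_ge; rewrite ?ler_nat.
apply: le_trans (card_frequent_ge n R S_gt0) _; rewrite ler_nat subset_leq_card //.
apply/subsetP => w; rewrite !inE => /andP [wS w_freq]; rewrite wS /=.
apply/asboolP => i pi pi_dist.
apply: (covV_dominates astarS z0S zpS z0_cnt zp_cnt) => // [j | s sS].
  exact: (forallP wS).
exact: (implyP (forallP w_freq s)).
Qed.
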